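(* Let $n$ be a positive integer and $m_0, m_1, \dots, m_{n-1}$ positive integers. Let $x_0, x_1, \dots, x_n$ be positive odd integers with $x_k = (2^{m_{k-1}}x_{k-1}-1)/3$ for $1 \le k \le n$, and put $b_k = \sum_{h=0}^{k-1} m_h$ (so $b_0 = 0$). For a positive odd integer $y_0$, define $y_k = (2^{m_{k-1}}y_{k-1}-1)/3$ for $1 \le k \le n$. Then $y_1, \dots, y_n$ are all (odd) integers if and only if $y_0 \equiv x_0 \pmod{2\cdot 3^n}$; in that case $y_k \equiv x_k \pmod{2^{b_k+1}3^{n-k}}$ for every $0 \le k \le n$. In particular there are infinitely many such sequences $y_0, y_1, \dots, y_n$ generated with the same numbers $m_0, \dots, m_{n-1}$. *)

From mathcomp Require Import all_boot all_order all_algebra.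
Set Implicit Arguments. Unset Strict Implicit. Unset Printing Implicit Defensive.
Import Order.TTheory GRing.Theory Num.Theory.
Local Open Scope ring_scope.

(* The sequence y_0 = y0, y_{k+1} = (2^{m_k} y_k - 1)/3, computed in rat
   (so that "y_k is an integer" is a genuine condition). *)
Fixpoint yseq (m : nat -> nat) (y0 : rat) (k : nat) : rat :=
  match k with
  | 0 => y0
  | k'.+1 => (2 ^+ m k' * yseq m y0 k' - 1) / 3
  end.

Definition bsum (m : nat -> nat) (k : nat) : nat := (\sum_(h < k) m h)%N.

Definition pos_odd (z : int) : Prop := 0 < z /\ (z %% 2)%Z = 1.

From mathcomp Require Import all_boot all_order all_algebra ring.
(* Both sequences obey the same affine recursion, so 3^k (y_k - x_k) = 2^(b_k) (y_0 - x_0).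
   Hence y_n is an integer iff 3^n divides y_0 - x_0 (2 being prime to 3), and then
   y_0 = x_0 + 2 t 3^n gives the explicit solution y_k = x_k + t 2^(b_k + 1) 3^(n - k). *)

Set Implicit Arguments.
Unset Strict Implicit.
Unset Printing Implicit Defensive.

Import Order.TTheory GRing.Theory Num.Theory.
Local Open Scope ring_scope.

Lemma bsumS m k : bsum m k.+1 = (bsum m k + m k)%N.
Proof. by rewrite /bsum big_ord_recr. Qed.

Lemma yseq_affine m (a b : rat) k :
  3 ^+ k * (yseq m a k - yseq m b k) = 2 ^+ bsum m k * (a - b).
Proof.
elim: k => [|k IHk] /=; first by rewrite /bsum big_ord0 !expr0 !mul1r.
rewrite bsumS exprD mulrAC -IHk exprSr.
by move: (yseq m a k) (yseq m b k) => ya yb; field.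
Qed.

Lemma yseq_shift m (b c : rat) n k : (k <= n)%N ->
  yseq m (b + c * 3 ^+ n) k = yseq m b k + c * 2 ^+ bsum m k * 3 ^+ (n - k).
Proof.
move=> le_kn; apply: (@mulfI _ (3 ^+ k)); first by rewrite expf_neq0.
rewrite -[LHS](subrK (3 ^+ k * yseq m b k)) -mulrBr yseq_affine.
by rewrite -(subnKC le_kn) addKn exprD; ring.
Qed.

Section Orbit.

Variables (n : nat) (m : nat -> nat) (x : nat -> int).
Hypothesis hxrec : forall k : nat, (1 <= k <= n)%N ->
  3 * x k = 2 ^+ m k.-1 * x k.-1 - 1.

Lemma yseq_x0 k : (k <= n)%N -> yseq m (x 0%N)%:~R k = (x k)%:~R.
Proof.
elim: k => [|k IHk] lt_kn //=.
have /(congr1 (intr : int -> rat)) := @hxrec k.+1 lt_kn.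
rewrite rmorphB !rmorphM rmorphXn /= -IHk ?(ltnW lt_kn) // => <-.
by rewrite mulrC mulKf.
Qed.

Definition shifted (t : int) k : int := x k + t * 2 ^+ (bsum m k).+1 * 3 ^+ (n - k).

Lemma shifted0 t : shifted t 0 = x 0%N + t * (2 * 3 ^+ n).
Proof. by rewrite /shifted /bsum big_ord0 subn0 mulrA. Qed.

Lemma yseq_shifted t k : (k <= n)%N -> yseq m (shifted t 0)%:~R k = (shifted t k)%:~R.
Proof.
move=> le_kn; rewrite shifted0 mulrA rmorphD rmorphM rmorphXn /= yseq_shift // yseq_x0 //.
by rewrite /shifted rmorphD !rmorphM !rmorphXn /= exprS; ring.
Qed.

Lemma shifted_eqmod t k :
  (shifted t k == x k %[mod 2 ^+ (bsum m k).+1 * 3 ^+ (n - k)])%Z.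
Proof. by rewrite eqz_mod_dvd /shifted addrAC subrr add0r -mulrA dvdz_mull. Qed.

Lemma shifted_mod2 t k : (shifted t k %% 2)%Z = (x k %% 2)%Z.
Proof.
have -> : shifted t k = t * 2 ^+ bsum m k * 3 ^+ (n - k) * 2 + x k.
  by rewrite /shifted exprS; ring.
by rewrite modzMDl.
Qed.

Lemma shifted_gt0 t k : 0 <= t -> 0 < x k -> 0 < shifted t k.
Proof. by move=> t_ge0 xk_gt0; rewrite ltr_wpDr // !mulr_ge0 // exprn_ge0. Qed.

Lemma dvdz_of_yseq_int (y0 z : int) :
  yseq m y0%:~R n = z%:~R -> (3 ^+ n %| y0 - x 0%N)%Z.
Proof.
move=> yn_int.
have E : 3 ^+ n * (z - x n) = 2 ^+ bsum m n * (y0 - x 0%N).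
  apply: (@intr_inj rat); have := yseq_affine m y0%:~R (x 0%N)%:~R n.
  by rewrite yn_int yseq_x0 // !rmorphM !rmorphB !rmorphXn.
rewrite -(@Gauss_dvdzr _ (2 ^+ bsum m n)) -?E ?dvdz_mulr //.
by rewrite coprimezXl // coprimezXr.
Qed.

End Orbit.

Theorem lemma10 (n : nat) (m : nat -> nat) (x : nat -> int)
  (hn : (0 < n)%N)
  (hm : forall h : nat, (h < n)%N -> (0 < m h)%N)
  (hx : forall k : nat, (k <= n)%N -> pos_odd (x k))
  (hxrec : forall k : nat, (1 <= k <= n)%N ->
     3 * x k = 2 ^+ m k.-1 * x k.-1 - 1) :
  (forall y0 : int, pos_odd y0 ->
     ((forall k : nat, (1 <= k <= n)%N ->
         exists z : int, yseq m y0%:~R k = z%:~R)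
      <-> (y0 == x 0%N %[mod (2 * 3 ^ n)%N%:Z])%Z)
     /\ ((y0 == x 0%N %[mod (2 * 3 ^ n)%N%:Z])%Z ->
         forall k : nat, (k <= n)%N ->
           exists z : int, yseq m y0%:~R k = z%:~R /\ (z %% 2)%Z = 1 /\
             (z == x k %[mod (2 ^ (bsum m k).+1 * 3 ^ (n - k))%N%:Z])%Z))
  /\
  (forall N : nat, exists y0 : int, N%:Z < y0 /\ pos_odd y0 /\
     forall k : nat, (k <= n)%N ->
       exists z : int, yseq m y0%:~R k = z%:~R /\ pos_odd z).
Proof.
have natz_pow2M3 i j : (2 ^ i * 3 ^ j)%N%:Z = 2 ^+ i * 3 ^+ j.
  by rewrite PoszM -!natz !natrX.
have [x0_gt0 x0_odd] := hx 0%N (leq0n n).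
split=> [y0 [_ y0_odd] | N].
  have congr_int : (y0 == x 0%N %[mod (2 * 3 ^ n)%N%:Z])%Z -> forall k, (k <= n)%N ->
      exists z : int, yseq m y0%:~R k = z%:~R /\ (z %% 2)%Z = 1 /\
        (z == x k %[mod (2 ^ (bsum m k).+1 * 3 ^ (n - k))%N%:Z])%Z.
    rewrite eqz_mod_dvd (natz_pow2M3 1%N) => /dvdzP [t /eqP].
    rewrite subr_eq addrC -(shifted0 n m) => /eqP -> k le_kn.
    exists (shifted n m x t k); rewrite (yseq_shifted hxrec) // shifted_mod2 natz_pow2M3.
    by rewrite shifted_eqmod; have [] := hx k le_kn.
  split=> //; split=> [yseq_int | /congr_int yseq_int k /andP [_ le_kn]].
    have /yseq_int [z /(dvdz_of_yseq_int hxrec) dvd3] : (0 < n <= n)%N.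
      by rewrite hn leqnn.
    have dvd2 : (2 %| y0 - x 0%N)%Z by rewrite -eqz_mod_dvd y0_odd x0_odd.
    by rewrite eqz_mod_dvd (natz_pow2M3 1%N) Gauss_dvdz ?dvd2 // coprimezXr.
  by have [z [-> _]] := yseq_int k le_kn; exists z.
exists (shifted n m x N 0).
have N_lt : N%:Z < shifted n m x N 0
  by rewrite shifted0 ltr_pwDl // ler_peMr // mulr_ege1 // exprn_ege1.
split=> //; split; first by rewrite /pos_odd shifted_mod2 shifted_gt0.
move=> k le_kn; exists (shifted n m x N k); rewrite (yseq_shifted hxrec) //.
by have [xk_gt0 xk_odd] := hx k le_kn; rewrite /pos_odd shifted_mod2 shifted_gt0.
Qed.
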